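(* Let $\mathcal L_H:\mathbb R^{D_1\times\cdots\times D_N}\to\mathbb R_{\ge0}$ be differentiable and $\phi_H((W^{(\nu)})_{\nu\in\mathcal T}):=\mathcal L_H(\mathcal W_H)$ for a hierarchical tensor factorization with mode tree $\mathcal T$. Let $\nu\in\mathrm{int}(\mathcal T)$, $\nu_c\in C(\nu)$, and $r\in[R_\nu]$. If both $W^{(\nu)}_{r,:}=0$ and $W^{(\nu_c)}_{:,r}=0$, then $$\frac{\partial}{\partial W^{(\nu)}_{r,:}}\phi_H\big((W^{(\nu')})_{\nu'\in\mathcal T}\big)=0\quad\text{and}\quad\frac{\partial}{\partial W^{(\nu_c)}_{:,r}}\phi_H\big((W^{(\nu')})_{\nu'\in\mathcal T}\big)=0.$$
   Context: Fix $N\in\mathbb N$, $D_1,\dots,D_N\in\mathbb N$; $[K]:=\{1,\dots,K\}$; $\otimes$ the tensor product. A mode tree $\mathcal T$ over $[N]$ is a rooted tree whose nodes are labeled by subsets of $[N]$, with exactly $N$ leaves labeled $\{1\},\dots,\{N\}$, and where each interior node's label is the union of its children's labels; nodes are identified with labels, root $[N]$, $\mathrm{int}(\mathcal T)$ interior nodes, $Pa(\nu)$ parent, $C(\nu)$ children (fixed order). A hierarchical tensor factorization has $R_\nu\in\mathbb N$ ($\nu\in\mathrm{int}(\mathcal T)$), $R_{Pa([N])}:=1$, $R_{\{n\}}:=D_n$, weight matrices $W^{(\nu)}\in\mathbb R^{R_\nu\times R_{Pa(\nu)}}$. Intermediate tensors: $\mathcal W^{(\{n\},r)}:=W^{(\{n\})}_{:,r}$;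 for $\nu\in\mathrm{int}(\mathcal T)\setminus\{[N]\}$ (leaves to root), $r\in[R_{Pa(\nu)}]$: $\mathcal W^{(\nu,r)}:=\pi_\nu\big(\sum_{r'=1}^{R_\nu}W^{(\nu)}_{r',r}\bigotimes_{\nu_c\in C(\nu)}\mathcal W^{(\nu_c,r')}\big)$; end tensor $\mathcal W_H:=\pi_{[N]}\big(\sum_{r'=1}^{R_{[N]}}W^{([N])}_{r',1}\bigotimes_{\nu_c\in C([N])}\mathcal W^{(\nu_c,r')}\big)$, where $\pi_\nu$ permutes modes (ordered by children, each child's elements ascending) into ascending order of the elements of $\nu$. *)

From Stdlib Require List.
From HB Require Import structures.
From mathcomp Require Import all_boot all_order all_algebra.
From mathcomp Require Import all_classical all_reals all_analysis.
Set Implicit Arguments. Unset Strict Implicit. Unset Printing Implicit Defensive.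
Import Order.TTheory GRing.Theory Num.Theory.
Import numFieldNormedType.Exports.
Local Open Scope ring_scope.

(* Modes are 0-indexed: mode n of the paper corresponds to the ordinal n-1 : 'I_N. *)

Inductive mtree (N : nat) : Type :=
| MLeaf of 'I_N
| MNode of seq (mtree N).
Arguments MLeaf {N}.
Arguments MNode {N}.

Section Tree.
Variable N : nat.

Fixpoint leaves (t : mtree N) : seq 'I_N :=
  match t with
  | MLeaf n => [:: n]
  | MNode cs => flatten (map leaves cs)
  end.

Definition lab (t : mtree N) : {set 'I_N} := [set i in leaves t].

Fixpoint subtrees (t : mtree N) : seq (mtree N) :=
  t :: match t with
       | MLeaf _ => [::]
       | MNode cs => flatten (map subtrees cs)
       end.

Definition is_node (t : mtree N) : bool := if t is MNode _ then true else false.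
Definition children (t : mtree N) : seq (mtree N) :=
  if t is MNode cs then cs else [::].

(* T is a mode tree over [N]:
   - the root is an interior node (root label [N], and [N] \in int(T));
   - the leaves are labeled {1},...,{N}, each exactly once;
   - every interior node has at least one child;
   - distinct nodes have distinct labels (nodes are identified with labels). *)
Definition mode_tree (T : mtree N) : Prop :=
  [/\ is_node T,
      perm_eq (leaves T) (enum 'I_N),
      (forall s, List.In s (subtrees T) -> is_node s -> ~~ nilp (children s))
    & uniq (map lab (subtrees T))].

Variable D : 'I_N -> nat.
Variable Rk : {set 'I_N} -> nat.

Definition rk (t : mtree N) : nat :=
  match t with MLeaf n => D n | MNode _ => Rk (lab t) end.

(* R_{Pa(nu)} for a node nu of T (with R_{Pa([N])} := 1):
   search the node labeled nu, passing down the rank of the parent. *)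
Fixpoint find_prk (nu : {set 'I_N}) (p : nat) (s : mtree N) : option nat :=
  if lab s == nu then Some p else
  match s with
  | MLeaf _ => None
  | MNode cs =>
      (fix go (cs : seq (mtree N)) : option nat :=
         match cs with
         | [::] => None
         | c :: cs' =>
             match find_prk nu (Rk (lab s)) c with
             | Some x => Some x
             | None => go cs'
             end
         end) cs
  end.

Definition pa_rank (T : mtree N) (nu : {set 'I_N}) : nat :=
  odflt 0%N (find_prk nu 1 T).

Definition idx := {dffun forall n : 'I_N, 'I_(D n)}.

Variable R : realType.

(* the tensor space R^{D_1 x ... x D_N}, realised as row vectors indexed by
   (an enumeration of) the multi-indices, with its canonical normed structure *)
Definition tensor := 'rV[R]_#|{: idx}|.

Definition mk_tensor (f : idx -> R) : tensor := \row_k f (enum_val k).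

(* weight matrices: W nu is W^{(nu)}, W nu a b its entry (a,b) (0-indexed);
   only entries with a < R_nu, b < R_{Pa(nu)} are ever used. *)
Variable W : {set 'I_N} -> nat -> nat -> R.

(* ent t r i : entry of the intermediate tensor W^{(t, r)} (0-indexed r)
   at the multi-index (i_n)_{n in t} (i.e. i restricted to the modes of t,
   modes in ascending order, which is what pi_nu produces). The tensor
   product of the children's tensors followed by the permutation pi_nu
   gives the entrywise product of the children's entries at the
   corresponding restricted indices. *)
Fixpoint ent (t : mtree N) (r : nat) (i : idx) {struct t} : R :=
  match t with
  | MLeaf n => W (lab t) (i n) r
  | MNode cs =>
      \sum_(r' < Rk (lab t))
        W (lab t) r' r *
        (fix prodc (cs : seq (mtree N)) : R :=
           match cs with
           | [::] => 1
           | c :: cs' => ent c r' i * prodc cs'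
           end) cs
  end.

(* end tensor W_H (the root's column index 1 is index 0 here) *)
Definition endT (T : mtree N) : tensor := mk_tensor (fun i => ent T 0 i).

End Tree.

Definition phiH (N : nat) (D : 'I_N -> nat) (Rk : {set 'I_N} -> nat)
  (R : realType) (T : mtree N) (L : tensor D R -> R)
  (W : {set 'I_N} -> nat -> nat -> R) : R :=
  L (@endT N D Rk R W T).

Definition upd (N : nat) (R : Type) (W : {set 'I_N} -> nat -> nat -> R)
  (nu : {set 'I_N}) (a b : nat) (x : R) : {set 'I_N} -> nat -> nat -> R :=
  fun mu p q => if (mu == nu) && (p == a) && (q == b) then x else W mu p q.

From Stdlib Require List.
From HB Require Import structures.
From mathcomp Require Import all_boot all_order all_algebra.
From mathcomp Require Import all_classical all_reals all_analysis.
Import Order.TTheory GRing.Theory Num.Theory.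
Import numFieldNormedType.Exports.
Local Open Scope ring_scope.
Set Implicit Arguments. Unset Strict Implicit.

(* Both partial derivatives vanish because phi_H is constant along each of
   the two coordinate lines.  In
   W^(nu,j) = sum_r' W^(nu)_{r',j} * prod_{c in C(nu)} W^(c,r'), the summand
   r' = r vanishes with W^(nu_c,r) = 0 whatever the row W^(nu)_{r,:} is; and
   the column W^(nu_c)_{:,r} enters only W^(nu_c,r), which occurs only in that
   same summand, multiplied by W^(nu)_{r,j} = 0 for every j < R_{Pa(nu)}.
   Since distinct nodes carry distinct labels, changing weights inside the
   subtree of nu changes no other weight, and the end tensor depends on that
   subtree only through the W^(nu,j) with j < R_{Pa(nu)}. *)

Lemma In_cat (A : Type) (x : A) s t :
  List.In x (s ++ t) <-> List.In x s \/ List.In x t.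
Proof. by elim: s => [|y s IH] /=; [tauto | rewrite IH; tauto]. Qed.

Section ListIn.
Variables A B : Type.
Implicit Types (x y : A) (l s t : seq A).

Lemma In_flatten_map (g : A -> seq B) z l :
  List.In z (flatten (map g l)) <-> exists y, List.In y l /\ List.In z (g y).
Proof.
elim: l => [|y l IH]; first by split=> [|[? []]].
rewrite map_cons [flatten _]/= In_cat IH; split.
- case=> [Hz|[y' [Hy' Hz]]]; first by exists y; split; first left.
  by exists y'; split; first right.
- by case=> y' [[<-|Hy'] Hz]; [left | right; exists y'].
Qed.

Lemma In_split_cat x l : List.In x l -> exists s t, l = s ++ x :: t.
Proof.
elim: l => [|y l IH] //= [->|/IH [s [t ->]]]; first by exists [::], l.
by exists (y :: s), t.
Qed.

Lemma In_ohead_pmap (f : A -> option B) l q :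
  ohead (pmap f l) = Some q -> exists2 y, List.In y l & f y = Some q.
Proof.
elim: l => [|y l IH] //=; case Ey: (f y) => [q'|] /=.
  by case=> <-; exists y; [left|].
by case/IH=> y' Hy' Ey'; exists y'; [right|].
Qed.

Lemma ohead_pmap_In (f : A -> option B) l y q :
  List.In y l -> f y = Some q ->
  (forall y' q', List.In y' l -> f y' = Some q' -> q' = q) ->
  ohead (pmap f l) = Some q.
Proof.
elim: l => [|y0 l IH] //= Hy Ey Huniq.
case Ey0: (f y0) => [q0|] /=; first by rewrite (Huniq y0 q0) //; left.
case: Hy => [E|Hy]; first by move: Ey0; rewrite E Ey.
by apply: IH Hy Ey _ => y' q' Hy'; apply: Huniq; right.
Qed.
End ListIn.

Section UniqMap.
Variables (A : Type) (B : eqType) (f : A -> B).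
Implicit Types (x y : A) (l s t : seq A).

Lemma In_map_mem x l : List.In x l -> f x \in map f l.
Proof.
elim: l => [|y l IH] //= [->|/IH]; rewrite in_cons ?eqxx // => ->.
by rewrite orbT.
Qed.

Lemma uniq_map_In_inj l x y :
  uniq (map f l) -> List.In x l -> List.In y l -> f x = f y -> x = y.
Proof.
elim: l => [|z l IH] //= /andP[Hz U] [<-|Hx] [<-|Hy] // E.
- by case/negP: Hz; rewrite E In_map_mem.
- by case/negP: Hz; rewrite -E In_map_mem.
- exact: IH.
Qed.

Lemma uniq_map_cat_In s t x y :
  uniq (map f (s ++ t)) -> List.In x s -> List.In y t -> f x <> f y.
Proof.
rewrite map_cat cat_uniq => /and3P[_ Hdisj _] Hx Hy E.
by case/hasP: Hdisj; exists (f y); [|rewrite -E]; apply: In_map_mem.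
Qed.
End UniqMap.

Lemma eq_big_In (R I : Type) (idx : R) (op : R -> R -> R) (r : seq I)
    (F G : I -> R) :
  (forall i, List.In i r -> F i = G i) ->
  \big[op/idx]_(i <- r) F i = \big[op/idx]_(i <- r) G i.
Proof.
elim: r => [|i r IH] EFG; first by rewrite !big_nil.
by rewrite !big_cons EFG ?IH // => [j Hj|]; [apply: EFG; right | left].
Qed.

Lemma prod_In_eq0 (R : pzSemiRingType) I (r : seq I) (F : I -> R) i :
  List.In i r -> F i = 0 -> \prod_(j <- r) F j = 0.
Proof.
elim: r => [|j r IH] //= [->|Hi] F0; rewrite big_cons; first by rewrite F0 mul0r.
by rewrite IH // mulr0.
Qed.

Section Subtrees.
Variable N : nat.
Implicit Types (s t x y z k X : mtree N) (cs : seq (mtree N)).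

Fixpoint mtree_ind' (P : mtree N -> Prop) (HL : forall n, P (MLeaf n))
    (HN : forall cs, (forall k, List.In k cs -> P k) -> P (MNode cs)) t : P t :=
  match t with
  | MLeaf n => HL n
  | MNode cs =>
      HN cs (proj1 (List.Forall_forall P cs)
        ((fix go cs : List.Forall P cs :=
            if cs is k :: cs' then
              List.Forall_cons k (mtree_ind' HL HN k) (go cs')
            else List.Forall_nil P) cs))
  end.

Lemma In_subtrees_self t : List.In t (subtrees t).
Proof. by case: t; left. Qed.

Lemma In_subtrees_node x cs :
  List.In x (subtrees (MNode cs)) <->
  x = MNode cs \/ exists k, List.In k cs /\ List.In x (subtrees k).
Proof. by rewrite /= In_flatten_map; split=> [[<-|]|[->|]]; auto. Qed.

Lemma In_subtrees_child k cs x :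
  List.In k cs -> List.In x (subtrees k) -> List.In x (subtrees (MNode cs)).
Proof. by move=> Hk Hx; apply/In_subtrees_node; right; exists k. Qed.

Lemma subtrees_trans x y z :
  List.In x (subtrees y) -> List.In y (subtrees z) -> List.In x (subtrees z).
Proof.
move=> Hx; elim/mtree_ind': z => [n [->|[]] //|cs IH].
case/In_subtrees_node=> [<- //|[k [Hk Hy]]].
exact: In_subtrees_child Hk (IH k Hk Hy).
Qed.

Lemma subtrees_node_cat (cs1 cs2 : seq (mtree N)) k :
  subtrees (MNode (cs1 ++ k :: cs2)) =
  MNode (cs1 ++ k :: cs2) :: flatten (map (@subtrees N) cs1) ++
    (subtrees k ++ flatten (map (@subtrees N) cs2)).
Proof. by rewrite /= map_cat flatten_cat. Qed.

Lemma size_subtrees_child k cs :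
  List.In k cs -> (size (subtrees k) < size (subtrees (MNode cs)))%N.
Proof.
move=> Hk; have [cs1 [cs2 ->]] := In_split_cat Hk.
rewrite subtrees_node_cat /= ltnS !size_cat.
exact: leq_trans (leq_addr _ _) (leq_addl _ _).
Qed.

Lemma size_subtrees_le x t :
  List.In x (subtrees t) -> (size (subtrees x) <= size (subtrees t))%N.
Proof.
elim/mtree_ind': t => [n [<- //|[]]|cs IH].
case/In_subtrees_node=> [-> //|[k [Hk Hx]]].
exact: leq_trans (IH k Hk Hx) (ltnW (size_subtrees_child Hk)).
Qed.

Lemma node_notin_child_subtrees k cs :
  List.In k cs -> ~ List.In (MNode cs) (subtrees k).
Proof.
move=> Hk /size_subtrees_le; apply/negP.
by rewrite -ltnNge size_subtrees_child.
Qed.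

Lemma uniq_lab_child k cs :
  uniq (map (@lab N) (subtrees (MNode cs))) -> List.In k cs ->
  uniq (map (@lab N) (subtrees k)).
Proof.
move=> U Hk; have [cs1 [cs2 Ecs]] := In_split_cat Hk.
move: U; rewrite Ecs subtrees_node_cat /=.
by rewrite !map_cat !cat_uniq => /and3P[_ _ /and3P[]].
Qed.

Lemma uniq_lab_subtrees s t :
  uniq (map (@lab N) (subtrees t)) -> List.In s (subtrees t) ->
  uniq (map (@lab N) (subtrees s)).
Proof.
elim/mtree_ind': t => [n U [<- //|[]]|cs IH U].
case/In_subtrees_node=> [-> //|[k [Hk Hs]]].
exact: IH Hk (uniq_lab_child U Hk) Hs.
Qed.

Lemma children_lab_disjoint cs k k' y y' :
  uniq (map (@lab N) (subtrees (MNode cs))) -> List.In k cs -> List.In k' cs ->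
  List.In y (subtrees k) -> List.In y' (subtrees k') -> lab y = lab y' -> k = k'.
Proof.
move=> U Hk Hk' Hy Hy' E; have [s [t Ecs]] := In_split_cat Hk.
move: U Hk'; rewrite Ecs subtrees_node_cat /= => /andP[_ U].
have U' : uniq (map (@lab N) (subtrees k ++ flatten (map (@subtrees N) t))).
  by move: U; rewrite map_cat cat_uniq => /and3P[].
case/In_cat=> [Hs|[-> //|Ht]]; exfalso.
- apply: (uniq_map_cat_In U _ _ (esym E)); last by apply/In_cat; left.
  by apply/In_flatten_map; exists k'.
- by apply: (uniq_map_cat_In U' Hy _ E); apply/In_flatten_map; exists k'.
Qed.

Variable Rk : {set 'I_N} -> nat.

Lemma find_prk_self mu p t : lab t = mu -> find_prk Rk mu p t = Some p.
Proof. by move=> <-; case: t => [n|cs] /=; rewrite eqxx. Qed.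

Lemma find_prk_node mu p cs :
  find_prk Rk mu p (MNode cs) =
  if lab (MNode cs) == mu then Some p
  else ohead (pmap (find_prk Rk mu (Rk (lab (MNode cs)))) cs).
Proof.
rewrite /=; case: ifP => // _; move: (Rk _) => q.
by elim: cs => [|k cs IH] //=; rewrite IH; case: find_prk.
Qed.

Lemma find_prk_Some_lab mu p t q :
  find_prk Rk mu p t = Some q -> exists2 x, List.In x (subtrees t) & lab x = mu.
Proof.
elim/mtree_ind': t p q => [n|cs IH] p q.
  by rewrite /=; case: eqP => // <- _; exists (MLeaf n); first left.
rewrite find_prk_node; case: eqP => [<- _|_].
  by exists (MNode cs); first left.
move=> Hq; have [k Hk /(IH k Hk) [x Hx Ex]] := In_ohead_pmap Hq.
by exists x; first exact: In_subtrees_child Hk Hx.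
Qed.

Section DistinctLabels.
Variable T : mtree N.
Hypothesis uniq_labT : uniq (map (@lab N) (subtrees T)).

Lemma lab_inj x y :
  List.In x (subtrees T) -> List.In y (subtrees T) -> lab x = lab y -> x = y.
Proof. exact: uniq_map_In_inj. Qed.

Lemma lab_below_child_neq cs k z :
  List.In (MNode cs) (subtrees T) -> List.In k cs -> List.In z (subtrees k) ->
  lab z <> lab (MNode cs).
Proof.
move=> Hs Hk Hz E; have Hzs := In_subtrees_child Hk Hz.
have Ez := lab_inj (subtrees_trans Hzs Hs) Hs E; subst z.
exact: node_notin_child_subtrees Hk Hz.
Qed.

Lemma find_prk_child mu p cs k q :
  List.In (MNode cs) (subtrees T) -> lab (MNode cs) != mu -> List.In k cs ->
  find_prk Rk mu (Rk (lab (MNode cs))) k = Some q ->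
  find_prk Rk mu p (MNode cs) = Some q.
Proof.
move=> Hs Hne Hk Hq; rewrite find_prk_node (negbTE Hne).
apply: (ohead_pmap_In Hk Hq) => k' q' Hk' Hq'.
have [y Hy Ey] := find_prk_Some_lab Hq.
have [y' Hy' Ey'] := find_prk_Some_lab Hq'.
have Ek := children_lab_disjoint (uniq_lab_subtrees uniq_labT Hs) Hk Hk' Hy Hy'
  (etrans Ey (esym Ey')).
by move: Hq'; rewrite -Ek Hq => -[].
Qed.

End DistinctLabels.
End Subtrees.

Section Entries.
Context {N : nat} {D : 'I_N -> nat} {Rk : {set 'I_N} -> nat} {R : realType}.
Implicit Types (W : {set 'I_N} -> nat -> nat -> R) (s t x y z k X : mtree N)
  (cs : seq (mtree N)).

Lemma ent_node W cs j (i : idx D) :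
  ent Rk W (MNode cs) j i =
  \sum_(r' < Rk (lab (MNode cs))) W (lab (MNode cs)) r' j *
    \prod_(k <- cs) ent Rk W k r' i.
Proof.
apply: eq_bigr => r' _; congr (_ * _); move: (nat_of_ord r') => q; clear r'.
by elim: cs => [|k cs IH]; rewrite ?big_nil ?big_cons //= IH.
Qed.

Lemma ent_ext W W' s :
  (forall y, List.In y (subtrees s) -> W' (lab y) = W (lab y)) ->
  forall j (i : idx D), ent Rk W' s j i = ent Rk W s j i.
Proof.
elim/mtree_ind': s => [n|cs IH] HW j i; first by rewrite /= HW //; left.
rewrite !ent_node HW; last exact: In_subtrees_self.
apply: eq_bigr => r' _; congr (_ * _); apply: eq_big_In => k Hk.
by apply: IH => // y Hy; apply: HW; apply: In_subtrees_child Hk Hy.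
Qed.

Lemma ent_col_zero W c r :
  (forall a, (a < rk D Rk c)%N -> W (lab c) a r = 0) ->
  forall i : idx D, ent Rk W c r i = 0.
Proof.
case: c => [n|cs] Hcol i; first exact: Hcol.
by rewrite ent_node big1 // => r' _; rewrite Hcol ?mul0r.
Qed.

Lemma upd_other W nu a b v mu : mu != nu -> upd W nu a b v mu = W mu.
Proof.
by move=> Hne; apply/funext=> p; apply/funext=> q; rewrite /upd (negbTE Hne).
Qed.

Lemma upd_other_row W nu a b v mu p q :
  p != a -> upd W nu a b v mu p q = W mu p q.
Proof. by move=> Hne; rewrite /upd (negbTE Hne) andbF. Qed.

Lemma upd_other_col W nu a b v mu p q :
  q != b -> upd W nu a b v mu p q = W mu p q.
Proof. by move=> Hne; rewrite /upd (negbTE Hne) andbF. Qed.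

Lemma upd_outside X z W a b v mu :
  List.In z (subtrees X) -> (forall y, List.In y (subtrees X) -> lab y <> mu) ->
  upd W (lab z) a b v mu = W mu.
Proof. by move=> Hz Hmu; apply: upd_other; apply/eqP=> E; apply: (Hmu z Hz). Qed.

Lemma phiH_ext T (L : tensor D R -> R) W W' :
  (forall i : idx D, ent Rk W' T 0 i = ent Rk W T 0 i) ->
  phiH Rk T L W' = phiH Rk T L W.
Proof.
move=> E; rewrite /phiH /endT /mk_tensor; congr L.
by apply/rowP=> k; rewrite !mxE.
Qed.

Section DistinctLabels.
Variable T : mtree N.
Hypothesis uniq_labT : uniq (map (@lab N) (subtrees T)).

(* Computing the columns j < p of [s] uses exactly the columns
   j < odflt 0 (find_prk Rk (lab X) p s) of the node [X]. *)
Lemma ent_ext_above X W W' s p :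
  List.In s (subtrees T) -> List.In X (subtrees s) ->
  (forall mu, (forall z, List.In z (subtrees X) -> lab z <> mu) ->
     W' mu = W mu) ->
  (forall j (i : idx D), (j < odflt 0 (find_prk Rk (lab X) p s))%N ->
     ent Rk W' X j i = ent Rk W X j i) ->
  forall j (i : idx D), (j < p)%N -> ent Rk W' s j i = ent Rk W s j i.
Proof.
move=> + + HW; elim/mtree_ind': s p => [n|cs IH] p Hs HXs HX j i Hj.
  case: HXs => [EX|[]]; subst X.
  by apply: HX; rewrite find_prk_self.
case: (eqVneq (lab (MNode cs)) (lab X)) => [E|Hne].
  have EX := lab_inj uniq_labT Hs (subtrees_trans HXs Hs) E; subst X.
  by apply: HX; rewrite find_prk_self.
have [EX|[kX [HkX HXkX]]] := proj1 (In_subtrees_node X cs) HXs.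
  by move: Hne; rewrite EX eqxx.
rewrite !ent_node HW => [|z Hz]; last first.
  exact: (lab_below_child_neq uniq_labT Hs HkX (subtrees_trans Hz HXkX)).
apply: eq_bigr => r' _; congr (_ * _); apply: eq_big_In => k Hk.
have HkT := subtrees_trans (In_subtrees_child Hk (In_subtrees_self k)) Hs.
have [HXk|HXk] := pselect (List.In X (subtrees k)).
  apply: (IH k Hk) => // j' i' Hj'.
  case Ef: find_prk Hj' => [q|//] Hj'; apply: HX.
  by rewrite (find_prk_child uniq_labT p Hs Hne Hk Ef).
apply: ent_ext => y Hy; apply: HW => z Hz Ez.
have Ek := children_lab_disjoint (uniq_lab_subtrees uniq_labT Hs) Hk HkX Hy
  (subtrees_trans Hz HXkX) (esym Ez).
by subst k.
Qed.

Lemma phiH_ext_subtree (L : tensor D R -> R) X W W' :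
  List.In X (subtrees T) ->
  (forall mu, (forall z, List.In z (subtrees X) -> lab z <> mu) ->
     W' mu = W mu) ->
  (forall j (i : idx D), (j < pa_rank Rk T (lab X))%N ->
     ent Rk W' X j i = ent Rk W X j i) ->
  phiH Rk T L W' = phiH Rk T L W.
Proof.
move=> HXT HW HX; apply: phiH_ext => i.
by apply: (ent_ext_above (In_subtrees_self T) HXT HW (p := 1%N)) => // j i' /HX.
Qed.

Lemma ent_child_upd_parent W cs k :
  List.In (MNode cs) (subtrees T) -> List.In k cs ->
  forall a b v j (i : idx D),
  ent Rk (upd W (lab (MNode cs)) a b v) k j i = ent Rk W k j i.
Proof.
move=> Hs Hk a b v; apply: ent_ext => y Hy; apply: upd_other; apply/eqP.
exact: (lab_below_child_neq uniq_labT Hs Hk Hy).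
Qed.

Lemma ent_upd_other_col W s j b :
  List.In s (subtrees T) -> j != b ->
  forall a v (i : idx D), ent Rk (upd W (lab s) a b v) s j i = ent Rk W s j i.
Proof.
case: s => [n|cs] Hs Hj a v i; first exact: upd_other_col.
rewrite !ent_node; apply: eq_bigr => r' _; rewrite upd_other_col //.
by congr (_ * _); apply: eq_big_In => k Hk; apply: ent_child_upd_parent.
Qed.

Lemma ent_node_upd_row W cs c r :
  List.In (MNode cs) (subtrees T) -> List.In c cs ->
  (forall i : idx D, ent Rk W c r i = 0) ->
  forall b v j (i : idx D),
  ent Rk (upd W (lab (MNode cs)) r b v) (MNode cs) j i = ent Rk W (MNode cs) j i.
Proof.
move=> Hs Hc Hc0 b v j i; rewrite !ent_node; apply: eq_bigr => r' _.
case: (eqVneq (r' : nat) r) => [Er|Nr].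
  by rewrite Er !(prod_In_eq0 Hc) ?mulr0 // ent_child_upd_parent.
rewrite upd_other_row //; congr (_ * _); apply: eq_big_In => k Hk.
exact: ent_child_upd_parent.
Qed.

Lemma ent_node_upd_col W cs c r j :
  List.In (MNode cs) (subtrees T) -> List.In c cs ->
  W (lab (MNode cs)) r j = 0 ->
  forall a v (i : idx D),
  ent Rk (upd W (lab c) a r v) (MNode cs) j i = ent Rk W (MNode cs) j i.
Proof.
move=> Hs Hc Hr0 a v i.
have HkT k : List.In k cs -> List.In k (subtrees T).
  move=> Hk; apply: (subtrees_trans _ Hs).
  exact: In_subtrees_child Hk (In_subtrees_self k).
have HcT := HkT c Hc.
have Hne : lab (MNode cs) != lab c.
  apply/eqP=> E.
  exact: (lab_below_child_neq uniq_labT Hs Hc (In_subtrees_self c)) (esym E).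
rewrite !ent_node upd_other //; apply: eq_bigr => r' _.
case: (eqVneq (r' : nat) r) => [->|Nr]; first by rewrite Hr0 !mul0r.
congr (_ * _); apply: eq_big_In => k Hk.
have [Hck|Hck] := pselect (List.In c (subtrees k)).
  have Ek := children_lab_disjoint (uniq_lab_subtrees uniq_labT Hs) Hk Hc Hck
    (In_subtrees_self c) erefl.
  by subst k; apply: ent_upd_other_col.
apply: ent_ext => y Hy; apply: upd_other; apply/eqP=> E; apply: Hck.
by rewrite -(lab_inj uniq_labT (subtrees_trans Hy (HkT k Hk)) HcT E).
Qed.

End DistinctLabels.
End Entries.

Lemma is_derive_eq_cst (K : numFieldType) (V W : normedModType K)
    (f : V -> W) c x v :
  (forall y, f y = c) -> is_derive x v f 0.
Proof.
by move=> Ef; rewrite (_ : f = cst c); [exact: is_derive_cst | apply/funext].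
Qed.

Unset Implicit Arguments. Set Strict Implicit.

Theorem lemma11 (R : realType) (N : nat) (D : 'I_N -> nat)
  (T : mtree N) (HT : mode_tree T)
  (Rk : {set 'I_N} -> nat)
  (L : tensor D R -> R)
  (HL0 : forall x, 0 <= L x)
  (HL : forall x, differentiable L x)
  (W : {set 'I_N} -> nat -> nat -> R)
  (cs : seq (mtree N)) (Hnu : List.In (MNode cs) (subtrees T))
  (c : mtree N) (Hc : List.In c cs)
  (r : nat) (Hr : (r < Rk (lab (MNode cs)))%N)
  (Hrow : forall j, (j < pa_rank Rk T (lab (MNode cs)))%N ->
            W (lab (MNode cs)) r j = 0)
  (Hcol : forall a, (a < rk D Rk c)%N -> W (lab c) a r = 0) :
  (forall j, (j < pa_rank Rk T (lab (MNode cs)))%N ->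
     is_derive (0 : R) (1 : R)
       (fun t : R => phiH Rk T L
          (upd W (lab (MNode cs)) r j (W (lab (MNode cs)) r j + t))) 0)
  /\
  (forall a, (a < rk D Rk c)%N ->
     is_derive (0 : R) (1 : R)
       (fun t : R => phiH Rk T L (upd W (lab c) a r (W (lab c) a r + t))) 0).
Proof.
have [_ _ _ uniqT] := HT.
have Hcnu := In_subtrees_child Hc (In_subtrees_self c).
split=> [j _|a _]; apply: is_derive_eq_cst => t;
  apply: (phiH_ext_subtree uniqT L Hnu) => [mu|j' i].
- exact: upd_outside (In_subtrees_self _).
- by move=> _; exact: (ent_node_upd_row uniqT Hnu Hc (ent_col_zero Hcol)).
- exact: upd_outside Hcnu.
- by move=> /Hrow Hr0; exact: (ent_node_upd_col uniqT Hnu Hc Hr0).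
Qed.
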